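(* Let $S=\{g_1,\dots,g_d\}$ be a finite set of generator symbols, $\mathcal C$ a finite set of colors, and $T$ a finite set of Wang tiles on $\mathcal C$ and $S$. Then $T$ satisfies condition $(\star\star)'$ if and only if the family of graphs $\Gamma_1,\dots,\Gamma_d$ associated to $T$ satisfies condition $(\star\star)$.
   Context: A Wang tile on $\mathcal C$ and $S$ is a map $\tau: S\cup S^{-1}\to\mathcal C$. The graphs associated to $T$: for each $1\le i\le d$, $\Gamma_i$ is the directed graph with vertex set $T$ and an edge $\tau\to\tau'$ if and only if $\tau(g_i)=\tau'(g_i^{-1})$. A cycle in a directed graph $\Gamma$ is a closed walk $\overline{a_1,\dots,a_n}$ (vertices and edges may repeat) with edges $a_k\to a_{k+1}$ for $k<n$ and $a_n\to a_1$; it is simple if $a_1,\dots,a_n$ are pairwise distinct. For a cycle $w$ and vertex $a$, $|w|_a=\#\{k : a_k=a\}$. Let $\mathcal{SC}(\Gamma_i)=\{\omega_i^1,\dots,\omega_i^{m_i}\}$ be the (finite) set of simple cycles of $\Gamma_i$ (up to cyclic rotation). Condition $(\star\star)$: every $\Gamma_i$ contains at least one cycle, and there exist nonnegative reals $x_{i,j}$ ($1\le i\le d$, $1\le j\le m_i$), not all zero, such that for every vertex $a\in T$, $\sum_{j=1}^{m_1} x_{1,j}|\omega_1^j|_a=\sum_{j=1}^{m_2} x_{2,j}|\omega_2^j|_a=\dots=\sum_{j=1}^{m_d} x_{d,j}|\omega_d^j|_a$. Condition $(\star\star)'$: for $g\in S\cup S^{-1}$ and $c\in\mathcal C$ let $c_g=\{\tau\in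 T:\tau(g)=c\}$. $T$ satisfies $(\star\star)'$ if there exist nonnegative reals $(x_\tau)_{\tau\in T}$, not all zero, with $\sum_{\tau\in c_g}x_\tau=\sum_{\tau\in c_{g^{-1}}}x_\tau$ for all $g\in S$ and all $c\in\mathcal C$. *)

From HB Require Import structures.
From mathcomp Require Import all_boot all_order all_algebra.
Set Implicit Arguments. Unset Strict Implicit. Unset Printing Implicit Defensive.
Import Order.TTheory GRing.Theory Num.Theory.
Local Open Scope ring_scope.

(* Generators S = {g_0, ..., g_(d-1)} indexed by 'I_d.  The symbols of
   S ∪ S^{-1} are pairs (i, b) : 'I_d * bool, with (i, false) = g_i and
   (i, true) = g_i^{-1}. *)
Definition wang_tile (d : nat) (C : finType) := {ffun 'I_d * bool -> C}.

Definition gen {d : nat} (i : 'I_d) : 'I_d * bool := (i, false).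
Definition geninv {d : nat} (i : 'I_d) : 'I_d * bool := (i, true).

Section Wang.
Variables (d : nat) (C : finType) (T : {set wang_tile d C}).

Definition Gamma (i : 'I_d) : rel (wang_tile d C) :=
  fun tau tau' => [&& tau \in T, tau' \in T & tau (gen i) == tau' (geninv i)].

Definition is_cycle (i : 'I_d) (w : seq (wang_tile d C)) : bool :=
  (w != [::]) && cycle (Gamma i) w.

Definition is_simple_cycle (i : 'I_d) (w : seq (wang_tile d C)) : bool :=
  is_cycle i w && uniq w.

Fixpoint seqs_in (n : nat) : seq (seq (wang_tile d C)) :=
  if n is n'.+1 then [seq x :: s | x <- enum T, s <- seqs_in n'] else [:: [::]].

(* canonical representative of the rotation class of w: rotate w so that it
   starts with its element of least rank in the enumeration of the tile type *)
Definition canon_rot (w : seq (wang_tile d C)) : seq (wang_tile d C) :=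
  match w with
  | [::] => [::]
  | a :: _ => let x := head a [seq y <- enum (wang_tile d C) | y \in w] in
              rot (index x w) w
  end.

(* SC(Gamma_i): the finite set of simple cycles of Gamma_i up to rotation,
   each represented once (by its canonical rotation) *)
Definition simple_cycles (i : 'I_d) : seq (seq (wang_tile d C)) :=
  undup [seq canon_rot w |
          w <- flatten [seq seqs_in n | n <- iota 1 #|T|] & is_simple_cycle i w].

Definition occ (w : seq (wang_tile d C)) (a : wang_tile d C) : nat := count_mem a w.

Variable R : realFieldType.

Definition cond_star_star : Prop :=
  (forall i : 'I_d, exists w, is_cycle i w) /\
  exists x : 'I_d -> seq (wang_tile d C) -> R,
    (forall i w, w \in simple_cycles i -> 0 <= x i w) /\
    (exists i, exists2 w, w \in simple_cycles i & x i w != 0) /\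
    (forall a, a \in T -> forall i j : 'I_d,
        \sum_(w <- simple_cycles i) x i w * (occ w a)%:R =
        \sum_(w <- simple_cycles j) x j w * (occ w a)%:R).

Definition cond_star_star' : Prop :=
  exists x : wang_tile d C -> R,
    (forall tau, tau \in T -> 0 <= x tau) /\
    (exists2 tau, tau \in T & x tau != 0) /\
    (forall (i : 'I_d) (c : C),
        \sum_(tau in T | tau (gen i) == c) x tau =
        \sum_(tau in T | tau (geninv i) == c) x tau).

End Wang.

From mathcomp Require Import all_boot all_order all_algebra.
Set Implicit Arguments. Unset Strict Implicit. Unset Printing Implicit Defensive.
Import Order.TTheory GRing.Theory Num.Theory.
Local Open Scope ring_scope.

(* Along a cycle of Gamma_i every colour occurs as often at g_i as at g_i^-1,
   so the occurrence vector of a cycle solves the balance equations of (**)'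
   for g_i, and so does every nonnegative combination of simple cycles; this
   gives (**) => (**)'.  Conversely, if x >= 0 solves the balance equations
   for g_i, every tile of its support has a Gamma_i-successor in the support.
   Hence the support contains a simple cycle, and subtracting from x the
   minimum of x along that cycle times its occurrence vector leaves a
   nonnegative solution with smaller support.  So x is a nonnegative
   combination of simple cycles of each Gamma_i, which gives (**). *)

Lemma perm_map_cycle (X Y : eqType) (e : rel X) (f g : X -> Y) (w : seq X) :
  (forall x y, e x y -> f x = g y) -> cycle e w -> perm_eq (map f w) (map g w).
Proof.
move=> efg; case: w => [//|a s].
have map_belast x p : path e x p -> map f (belast x p) = map g p.
  by elim: p x => [//|y p IHp] x /= /andP[/efg-> /IHp->].
move/map_belast; rewrite belast_rcons => ->.
by rewrite -rot1_cons map_rot perm_rot.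
Qed.

Lemma exists_simple_cycle_in (X : finType) (e : rel X) (P : pred X) (x0 : X) :
  (forall x, P x -> exists2 y, P y & e x y) -> P x0 ->
  exists w, [&& w != [::], cycle e w, uniq w & all P w].
Proof.
move=> succP Px0.
pose f x := if [pick y | P y && e x y] is Some y then y else x.
have Pf x : P x -> P (f x) && e x (f x).
  move=> Px; rewrite /f; case: pickP => [//|none].
  by have [y Py exy] := succP x Px; have := none y; rewrite Py exy.
have P_iter n x : P x -> P (iter n f x).
  by move=> Px; elim: n => [//|n IHn] /=; case/andP: (Pf _ IHn).
(* Iterating f from x0 eventually enters a periodic orbit. *)
have /trajectP[k lt_k_order iter_k] := looping_order f x0.
set z := iter k f x0.
have z_periodic : exists m, iter m.+1 f z = z.
  exists (order f x0 - k.+1)%N; rewrite /z -iterD.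
  by rewrite subnSK // subnK ?iter_k // ltnW.
have fcycle_z : fcycle f (orbit f z).
  exact: (all_iffLR (@orbitPcycle _ f z) 3 0 z_periodic).
have P_orbit : all P (orbit f z).
  by apply/allP => y /trajectP[m _ ->]; apply/P_iter/P_iter.
exists (orbit f z); rewrite orbit_uniq P_orbit !andbT.
apply/andP; split; first by apply/eqP => orbit0; have := in_orbit f z; rewrite orbit0.
apply: (sub_in_cycle _ P_orbit fcycle_z) => x y Px _ /eqP <-.
by case/andP: (Pf x Px).
Qed.

Section WangCycles.
Variables (d : nat) (C : finType) (T : {set wang_tile d C}) (R : realFieldType).
Local Notation W := (wang_tile d C).
Implicit Types (i : 'I_d) (w : seq W) (y : W -> R).

Lemma cycle_Gamma_sub i w : cycle (Gamma T i) w -> {subset w <= T}.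
Proof. by move=> cw t tw; have /and3P[] := next_cycle cw tw. Qed.

Lemma count_gen_cycle i w c : cycle (Gamma T i) w ->
  count (fun t : W => t (gen i) == c) w = count (fun t : W => t (geninv i) == c) w.
Proof.
have out_in t t' : Gamma T i t t' -> t (gen i) = t' (geninv i).
  by case/and3P=> _ _ /eqP.
move=> cw; have /permP/(_ (pred1 c)) := perm_map_cycle out_in cw.
by rewrite !count_map.
Qed.

Lemma sum_occ (P : pred W) w : {subset w <= T} ->
  \sum_(t in T | P t) (occ w t)%:R = (count P w)%:R :> R.
Proof.
move/allP=> sub_wT; rewrite -natr_sum; congr _%:R.
elim: w sub_wT => [|a w IHw] /=; first by rewrite big1.
case/andP=> aT /IHw <-; rewrite /occ /= big_split /=; congr (_ + _)%N.
case Pa: (P a).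
  rewrite (bigD1 a) /=; last by rewrite aT Pa.
  by rewrite eqxx big1 // => t /andP[_ /negbTE]; rewrite eq_sym => ->.
by rewrite big1 // => t /andP[_ Pt]; case: eqP => // eq_at; rewrite -eq_at Pa in Pt.
Qed.

Definition balanced i y := forall c : C,
  \sum_(t in T | t (gen i) == c) y t = \sum_(t in T | t (geninv i) == c) y t.

Lemma eq_balanced i y1 y2 :
  (forall t, t \in T -> y1 t = y2 t) -> balanced i y1 -> balanced i y2.
Proof.
move=> y12 b1 c; have eq_sum (P : pred W) :
    \sum_(t in T | P t) y1 t = \sum_(t in T | P t) y2 t.
  by apply: eq_bigr => t /andP[tT _]; apply: y12.
by rewrite -!eq_sum.
Qed.

Lemma balancedB i y1 y2 :
  balanced i y1 -> balanced i y2 -> balanced i (fun t => y1 t - y2 t).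
Proof. by move=> b1 b2 c; rewrite !sumrB b1 b2. Qed.

Lemma balancedZ i (e : R) y : balanced i y -> balanced i (fun t => e * y t).
Proof. by move=> b c; rewrite -!mulr_sumr b. Qed.

Lemma balanced_sum i (I : eqType) (s : seq I) (F : I -> W -> R) :
  (forall k, k \in s -> balanced i (F k)) ->
  balanced i (fun t => \sum_(k <- s) F k t).
Proof.
move=> bF c; rewrite exchange_big [RHS]exchange_big.
by apply: eq_big_seq => k /bF; apply.
Qed.

Lemma balanced_occ i w : cycle (Gamma T i) w -> balanced i (fun t => (occ w t)%:R).
Proof.
move=> cw c; have sub_wT := cycle_Gamma_sub cw.
by rewrite !(sum_occ _ sub_wT) (count_gen_cycle c cw).
Qed.

Lemma perm_canon_rot w : perm_eq (canon_rot w) w.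
Proof. by case: w => [|a s] //=; rewrite perm_rot. Qed.

Lemma simple_cycles_simple i w : w \in simple_cycles T i -> is_simple_cycle T i w.
Proof.
rewrite mem_undup => /mapP[v]; rewrite mem_filter => /andP[+ _] ->.
rewrite /is_simple_cycle /is_cycle; case: v => [//|a s] /=.
by rewrite rot_cycle rot_uniq -size_eq0 size_rot.
Qed.

Lemma seqs_in_size w : {subset w <= T} -> w \in seqs_in T (size w).
Proof.
elim: w => [|a w IHw] sub_awT /=; first by rewrite inE.
apply: (allpairs_f (fun x s => x :: s)); first by rewrite mem_enum sub_awT ?mem_head.
by apply: IHw => t tw; rewrite sub_awT // inE tw orbT.
Qed.

Lemma canon_rot_simple_cycles i w :
  is_simple_cycle T i w -> canon_rot w \in simple_cycles T i.
Proof.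
move=> sw; rewrite mem_undup; apply: map_f; rewrite mem_filter sw /=.
case/andP: sw => /andP[w0 cw] uw; have sub_wT := cycle_Gamma_sub cw.
apply/flattenP; exists (seqs_in T (size w)); last exact: seqs_in_size.
apply: map_f; rewrite mem_iota lt0n size_eq0 w0 add1n ltnS cardE.
by apply: uniq_leq_size => // t /sub_wT; rewrite mem_enum.
Qed.

Lemma uniq_simple_cycles i : uniq (simple_cycles T i).
Proof. exact: undup_uniq. Qed.

Definition cycle_comb i (x : seq W -> R) (a : W) : R :=
  \sum_(w <- simple_cycles T i) x w * (occ w a)%:R.

Definition cycle_cone i y := exists2 x : seq W -> R,
  forall w, w \in simple_cycles T i -> 0 <= x w &
  forall a, a \in T -> y a = cycle_comb i x a.

Lemma balanced_cycle_comb i x : balanced i (cycle_comb i x).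
Proof.
apply: balanced_sum => w /simple_cycles_simple /andP[/andP[_ cw] _].
exact/balancedZ/balanced_occ.
Qed.

Lemma cycle_comb_ge0 i x a :
  (forall w, w \in simple_cycles T i -> 0 <= x w) -> 0 <= cycle_comb i x a.
Proof.
by move=> x_ge0; rewrite /cycle_comb big_seq sumr_ge0 // => w /x_ge0/mulr_ge0->.
Qed.

Lemma cycle_comb_neq0 i x :
  (forall w, w \in simple_cycles T i -> 0 <= x w) ->
  (exists2 a, a \in T & cycle_comb i x a != 0) <->
  (exists2 w, w \in simple_cycles T i & x w != 0).
Proof.
move=> x_ge0; split=> [[a _ comb_neq0] | [w sw xw_neq0]].
  have [/hasP[w sw xw_neq0] | /hasPn x_eq0] :=
    boolP (has (fun w => x w != 0) (simple_cycles T i)); first by exists w.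
  move: comb_neq0; rewrite /cycle_comb big_seq big1 ?eqxx // => w /x_eq0/negPn/eqP->.
  exact: mul0r.
case/simple_cycles_simple/andP: (sw) => /andP[w_neq0 cw] uw.
have /hasP[a aw _] : has predT w by rewrite has_predT lt0n size_eq0.
exists a; first exact: cycle_Gamma_sub cw a aw.
rewrite /cycle_comb (bigD1_seq w) ?uniq_simple_cycles //= gt_eqF // ltr_pwDl //.
  by rewrite mulr_gt0 ?ltr0n ?lt_def ?xw_neq0 ?x_ge0 // /occ count_uniq_mem // aw.
by rewrite big_seq_cond sumr_ge0 // => v /andP[/x_ge0 xv_ge0 _]; rewrite mulr_ge0.
Qed.

Lemma cycle_cone0 i y : (forall a, a \in T -> y a = 0) -> cycle_cone i y.
Proof.
move=> y0; exists (fun _ => 0) => // a aT.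
by rewrite y0 // /cycle_comb big1 // => w _; rewrite mul0r.
Qed.

Lemma eq_cycle_cone i y1 y2 :
  (forall a, a \in T -> y1 a = y2 a) -> cycle_cone i y1 -> cycle_cone i y2.
Proof. by move=> y12 [x x_ge0 y1E]; exists x => // a aT; rewrite -y12 ?y1E. Qed.

Lemma cycle_coneD i y1 y2 :
  cycle_cone i y1 -> cycle_cone i y2 -> cycle_cone i (fun a => y1 a + y2 a).
Proof.
move=> [x1 x1_ge0 y1E] [x2 x2_ge0 y2E]; exists (fun w => x1 w + x2 w).
  by move=> w sw; rewrite addr_ge0 ?x1_ge0 ?x2_ge0.
move=> a aT; rewrite y1E // y2E // -big_split.
by apply: eq_bigr => w _; rewrite mulrDl.
Qed.

Lemma cycle_cone_occ i w (e : R) : is_simple_cycle T i w -> 0 <= e ->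
  cycle_cone i (fun a => e * (occ w a)%:R).
Proof.
move=> sw e_ge0; exists (fun v => if v == canon_rot w then e else 0).
  by move=> v _; case: ifP.
move=> a _; rewrite /cycle_comb (bigD1_seq (canon_rot w)) ?uniq_simple_cycles //=;
  last exact: canon_rot_simple_cycles.
rewrite eqxx big1 ?addr0 => [|v /negbTE->]; last exact: mul0r.
by rewrite /occ (permP (perm_canon_rot w) (pred1 a)).
Qed.

Definition pos_support y := [set t in T | 0 < y t].

Lemma balanced_succ i y t :
  (forall t, t \in T -> 0 <= y t) -> balanced i y ->
  t \in pos_support y -> exists2 t', t' \in pos_support y & Gamma T i t t'.
Proof.
move=> y_ge0 yb; rewrite inE => /andP[tT yt_gt0].
have [/existsP[t' /andP[t'_pos out_in]] | /existsPn no_succ] :=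
  boolP [exists t', (t' \in pos_support y) && (t (gen i) == t' (geninv i))].
  by exists t'; rewrite // /Gamma tT out_in andbT; case/setIdP: t'_pos.
have := yb (t (gen i)); rewrite [RHS]big1 => [|t' /andP[t'T /eqP in_t']].
  rewrite (bigD1 t) ?tT ?eqxx //= => /eqP; rewrite gt_eqF // ltr_pwDl //.
  by rewrite sumr_ge0 // => t' /andP[/andP[/y_ge0 ? _] _].
have := no_succ t'; rewrite inE t'T in_t' eqxx andbT /= lt_def y_ge0 // andbT.
by move/negPn/eqP.
Qed.

Lemma simple_cycle_in_pos_support i y t0 :
  (forall t, t \in T -> 0 <= y t) -> balanced i y -> t0 \in pos_support y ->
  exists2 w, is_simple_cycle T i w & {subset w <= pos_support y}.
Proof.
move=> y_ge0 yb t0_pos.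
have [w /and4P[w_neq0 cw uw /allP w_pos]] :=
  exists_simple_cycle_in (fun t => @balanced_succ i y t y_ge0 yb) t0_pos.
by exists w; rewrite /is_simple_cycle /is_cycle ?w_neq0 ?cw.
Qed.

Lemma balanced_cycle_cone i y :
  (forall t, t \in T -> 0 <= y t) -> balanced i y -> cycle_cone i y.
Proof.
have [n] := ubnP #|pos_support y|; elim: n y => // n IHn y supp_lt y_ge0 yb.
have [supp0 | [t0 t0_pos]] := set_0Vmem (pos_support y).
  apply: cycle_cone0 => a aT; apply/eqP; have := in_set0 a.
  by rewrite -supp0 inE aT lt_def y_ge0 // andbT => /negPn.
have [w sw w_pos] := simple_cycle_in_pos_support y_ge0 yb t0_pos.
case/andP: (sw) => /andP[w_neq0 cw] uw.
have /hasP[b bw _] : has predT w by rewrite has_predT lt0n size_eq0.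
have [a0 a0w a0_min] := arg_minP y bw; rewrite -/(a0 \in w) in a0w.
have /setIdP[a0T e_gt0] := w_pos a0 a0w.
set e := y a0 in e_gt0.
have occE a : occ w a = (a \in w) by rewrite /occ count_uniq_mem.
pose y' a := y a - e * (occ w a)%:R.
have y'_ge0 t : t \in T -> 0 <= y' t.
  move=> tT; rewrite /y' occE; case tw: (t \in w) => /=.
    by rewrite mulr1 subr_ge0 a0_min.
  by rewrite mulr0 subr0 y_ge0.
have supp'_lt : (#|pos_support y'| < n)%N.
  suff /proper_card/leq_trans-> : pos_support y' \proper pos_support y by [].
  apply/properP; split.
    apply/subsetP => t /setIdP[tT y't_gt0]; rewrite inE tT (lt_le_trans y't_gt0) //.
    by rewrite lerBlDr lerDl mulr_ge0 // ltW.
  exists a0; first by rewrite inE a0T.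
  by rewrite inE a0T /y' occE a0w mulr1 subrr ltxx.
have y'b : balanced i y' := balancedB yb (balancedZ e (balanced_occ cw)).
have := cycle_coneD (IHn y' supp'_lt y'_ge0 y'b) (cycle_cone_occ sw (ltW e_gt0)).
by apply: eq_cycle_cone => a _; rewrite subrK.
Qed.

End WangCycles.

Theorem mainTheorem1 (R : realFieldType) (d : nat) (C : finType)
    (T : {set wang_tile d C}) :
  (0 < d)%N ->
  cond_star_star' T R <-> cond_star_star T R.
Proof.
move=> d_gt0; split.
- case=> x [x_ge0 [[t tT xt_neq0] xb]].
  have [X X_ge0 xE] := fin_all_exists2 (fun i => balanced_cycle_cone x_ge0 (xb i)).
  have X_neq0 i : exists2 w, w \in simple_cycles T i & X i w != 0.
    by apply/(cycle_comb_neq0 (X_ge0 i)); exists t => //; rewrite -xE.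
  split=> [i | ].
    by have [w /simple_cycles_simple/andP[cw _] _] := X_neq0 i; exists w.
  exists X; split; first exact: X_ge0.
  split; first by exists (Ordinal d_gt0); apply: X_neq0.
  move=> a aT i j; exact: etrans (esym (xE i a aT)) (xE j a aT).
- case=> _ [X [X_ge0 [[i0 X_neq0] XE]]].
  exists (cycle_comb T i0 (X i0)); split=> [t _ | ]; first exact: cycle_comb_ge0 (X_ge0 i0).
  split; first exact/(cycle_comb_neq0 (X_ge0 i0)).
  by move=> i; apply: eq_balanced (balanced_cycle_comb T i (X i)) => t tT; apply: XE.
Qed.
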